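(* Let $X$ be a uniform space equipped with a uniformly continuous action of a group $\Gamma$. Let $Y$ be a closed subset of $X$. Suppose that there is a net $(Z_i)_{i \in I}$ of $\Gamma$-invariant subsets of $X$ converging to $Y$ in the Hausdorff-Bourbaki topology. Then $Y$ is $\Gamma$-invariant.
   Context: An action of $\Gamma$ on $X$ is uniformly continuous if each map $x \mapsto \gamma x$, $\gamma \in \Gamma$, is uniformly continuous. For $V \subset X \times X$ and $A \subset X$, $V[A] = \{x \in X : (x,a) \in V \text{ for some } a \in A\}$. The Hausdorff-Bourbaki uniform structure on the set $\mathcal{P}(X)$ of all subsets of $X$ has as a base the sets $\widehat{V} = \{(A,B) : B \subset V[A] \text{ and } A \subset V[B]\}$, $V$ an entourage of $X$; the Hausdorff-Bourbaki topology is its associated topology. *)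

From HB Require Import structures.
From mathcomp Require Import all_boot monoid.
From mathcomp Require Import all_classical topology.
Set Implicit Arguments. Unset Strict Implicit. Unset Printing Implicit Defensive.
Local Open Scope classical_set_scope.

Definition is_action (G : groupType) (X : Type) (act : G -> X -> X) : Prop :=
  (forall x, act (monoid.one : G) x = x) /\
  (forall g h x, act (monoid.mul g h) x = act g (act h x)).

Definition unif_continuous_action (G : groupType) (X : uniformType)
  (act : G -> X -> X) : Prop :=
  forall g : G, unif_continuous (act g).

Definition gamma_invariant (G : groupType) (X : Type) (act : G -> X -> X)
  (Z : set X) : Prop :=
  forall g : G, act g @` Z = Z.

Definition ent_image (X : Type) (V : set (X * X)) (A : set X) : set X :=
  [set x | exists2 a, A a & V (x, a)].

Definition hb_entourage (X : Type) (V : set (X * X)) : set (set X * set X) :=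
  [set AB | AB.2 `<=` ent_image V AB.1 /\ AB.1 `<=` ent_image V AB.2].

Definition directed (I : Type) (le : I -> I -> Prop) : Prop :=
  (exists i : I, True) /\
  (forall i, le i i) /\
  (forall i j k, le i j -> le j k -> le i k) /\
  (forall i j, exists k, le i k /\ le j k).

Definition hb_net_converges (X : uniformType) (I : Type) (le : I -> I -> Prop)
  (Z : I -> set X) (Y : set X) : Prop :=
  forall V : set (X * X), entourage V ->
    exists i0 : I, forall i, le i0 i -> hb_entourage V (Y, Z i).

From HB Require Import structures.
From mathcomp Require Import all_boot monoid.
From mathcomp Require Import all_classical topology.
Set Implicit Arguments. Unset Strict Implicit. Unset Printing Implicit Defensive.
Local Open Scope classical_set_scope.

(* If Y is closed and approximated, in the Hausdorff-Bourbaki sense, by sets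
   stable under a uniformly continuous map f, then f y lies in the closure of Y:
   pick z in an approximant close to y; f z stays in the approximant, which is
   close to Y, and f y is close to f z by uniform continuity.  Applying this to
   g and g^-1 gives invariance. *)

Lemma hb_net_converges_exists (X : uniformType) (I : Type) (le : I -> I -> Prop)
    (Z : I -> set X) (Y : set X) :
  directed le -> hb_net_converges le Z Y ->
  forall V, entourage V -> exists i, hb_entourage V (Y, Z i).
Proof.
move=> [_ [le_refl _]] conv V entV.
have [i0 near_i0] := conv V entV.
by exists i0; apply: near_i0.
Qed.

Lemma closed_image_sub_of_hb_approx (X : uniformType) (f : X -> X) (Y : set X) :
  unif_continuous f -> closed Y ->
  (forall V, entourage V ->
     exists2 A : set X, f @` A `<=` A & hb_entourage V (Y, A)) ->
  f @` Y `<=` Y.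
Proof.
move=> f_unif closedY approx _ [y Yy <-].
rewrite (closure_id Y).1 //.
move=> B /nbhsP [W entW sWB].
have [entW' W'W] := split_entP entW.
set W' := split_ent W in entW' W'W.
have entV : entourage ([set xy | W' (f xy.1, f xy.2)] `&` W').
  by apply: filterI => //; exact: f_unif.
have [A fAA [AY YA]] := approx _ entV.
have [a Aa [fya _]] := YA y Yy.
have [b Yb [_ fab]] := AY (f a) (fAA _ (imageP f Aa)).
exists b; split => //.
apply: sWB; rewrite /xsection /= inE.
by apply: W'W; exists (f a).
Qed.

Lemma gamma_invariant_of_image_sub (G : groupType) (X : Type)
    (act : G -> X -> X) (Y : set X) :
  is_action act -> (forall g, act g @` Y `<=` Y) -> gamma_invariant act Y.
Proof.
move=> [act1 actM] subY g; apply/seteqP; split; first exact: subY.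
move=> y Yy; exists (act (monoid.inv g) y); first exact/subY/imageP.
by rewrite -actM mulgV act1.
Qed.

Theorem corollary3p7 (G : groupType) (X : uniformType) (act : G -> X -> X)
  (Hact : is_action act) (Hunif : unif_continuous_action act)
  (Y : set X) (HY : closed Y)
  (I : Type) (le : I -> I -> Prop) (Hdir : directed le) (Z : I -> set X)
  (HZ : forall i, gamma_invariant act (Z i))
  (Hconv : hb_net_converges le Z Y) :
  gamma_invariant act Y.
Proof.
apply: gamma_invariant_of_image_sub => // g.
apply: closed_image_sub_of_hb_approx => // V entV.
have [i Zi_near] := hb_net_converges_exists Hdir Hconv entV.
by exists (Z i); first rewrite HZ.
Qed.
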